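(* Let $(\Omega,\mathcal{F})$ be a measurable space, $\mathrm{B}_b$ the space of bounded real-valued measurable functions on $\Omega$, and $C\subset\mathrm{B}_b$ with $0\in C$ and $X+m\in C$ for all $X\in C$, $m\in\mathbb{R}$. Let $H\colon C\to\mathbb{R}$ be a premium principle and define $$R_{\mathrm{Max}}(X):=\inf\{H(X_0)\mid X_0\in C,\ X_0\ge X\},\quad X\in\mathrm{B}_b.$$ Then $R_{\mathrm{Max}}\colon\mathrm{B}_b\to\mathbb{R}$ is a risk measure with $R_{\mathrm{Max}}(X)\le H(X)$ for all $X\in C$; moreover $D_{\mathrm{Min}}(X):=H(X)-R_{\mathrm{Max}}(X)$ defines a deviation measure on $C$, and $H(X)=R_{\mathrm{Max}}(X)+D_{\mathrm{Min}}(X)$ for all $X\in C$. For every other decomposition $H(X)=R(X)+D(X)$, $X\in C$, with a risk measure $R\colon\mathrm{B}_b\to\mathbb{R}$ and a deviation measure $D\colon C\to\mathbb{R}$, one has $R\le R_{\mathrm{Max}}$ (on $\mathrm{B}_b$) and $D\ge D_{\mathrm{Min}}$ (on $C$).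
   Context: Constants are identified with constant functions; $\le$ is the pointwise order. A premium principle is a map $H\colon C\to\mathbb{R}$ with (P1) $H(X+m)=H(X)+m$ for $X\in C$, $m\in\mathbb{R}$, and (P2) $H(0)=0$ and $H(X)\ge0$ for $X\in C$ with $X\ge0$. A risk measure is a map $R\colon\mathrm{B}_b\to\mathbb{R}$ with $R(X+m)=R(X)+m$ for $X\in\mathrm{B}_b$, $m\in\mathbb{R}$, $R(0)=0$, and $R(X)\le R(Y)$ whenever $X\le Y$. A deviation measure is a map $D\colon C\to\mathbb{R}$ with $D(X+m)=D(X)$ for $X\in C$, $m\in\mathbb{R}$, $D(0)=0$, and $D\ge0$ on $C$. *)

From HB Require Import structures.
From mathcomp Require Import all_boot all_order all_algebra.
From mathcomp Require Import all_classical all_reals.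
From mathcomp Require Import measure_theory.measurable_structure measure_theory.measurable_function.
From mathcomp Require Import lebesgue_measure.
Set Implicit Arguments. Unset Strict Implicit. Unset Printing Implicit Defensive.
Import Order.TTheory GRing.Theory Num.Theory.
Local Open Scope classical_set_scope.
Local Open Scope ring_scope.

Section Defs.
Context (d : measure_display) (T : measurableType d) (R : realType).

Definition Bb : set (T -> R) :=
  [set f : T -> R | measurable_fun setT f /\ exists M : R, forall w, `|f w| <= M].

Definition fle (X Y : T -> R) : Prop := forall w, X w <= Y w.

Definition addc (X : T -> R) (m : R) : T -> R := fun w => X w + m.

Definition zerof : T -> R := fun _ => 0.

Definition admissible_domain (C : set (T -> R)) : Prop :=
  C `<=` Bb /\ C zerof /\ (forall X m, C X -> C (addc X m)).

Definition premium_principle (C : set (T -> R)) (H : (T -> R) -> R) : Prop :=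
  (forall X m, C X -> H (addc X m) = H X + m) /\
  H zerof = 0 /\ (forall X, C X -> fle zerof X -> 0 <= H X).

(* risk measure on B_b (values outside B_b are irrelevant) *)
Definition risk_measure (Rm : (T -> R) -> R) : Prop :=
  (forall X m, Bb X -> Rm (addc X m) = Rm X + m) /\
  Rm zerof = 0 /\
  (forall X Y, Bb X -> Bb Y -> fle X Y -> Rm X <= Rm Y).

Definition deviation_measure (C : set (T -> R)) (D : (T -> R) -> R) : Prop :=
  (forall X m, C X -> D (addc X m) = D X) /\
  D zerof = 0 /\ (forall X, C X -> 0 <= D X).

Definition RMax (C : set (T -> R)) (H : (T -> R) -> R) (X : T -> R) : R :=
  inf [set H X0 | X0 in [set X0 | C X0 /\ fle X X0]].

Definition DMin (C : set (T -> R)) (H : (T -> R) -> R) (X : T -> R) : R :=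
  H X - RMax C H X.

End Defs.

From HB Require Import structures.
From mathcomp Require Import all_boot all_order all_algebra.
From mathcomp Require Import all_classical all_reals.
From mathcomp Require Import measure_theory.measurable_structure measure_theory.measurable_function.
From mathcomp Require Import lebesgue_measure measurable_realfun.
Set Implicit Arguments. Unset Strict Implicit. Unset Printing Implicit Defensive.
Import Order.TTheory GRing.Theory Num.Theory.
Local Open Scope classical_set_scope.
Local Open Scope ring_scope.

(* The set of premiums H X0 of the dominating X0 in C is bounded below (by
   cash invariance and positivity of H, H X0 >= -M when |X| <= M) and
   nonempty (it contains the constant M), so R_Max is a real number.  Cash
   invariance of R_Max is inherited from H by shifting the dominating X0,
   monotonicity holds because a larger X has fewer dominating X0, and
   R_Max <= H on C because X dominates itself.  Maximality: for any
   decomposition H = R + D and any X0 in C dominating X,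
   R X <= R X0 = H X0 - D X0 <= H X0, hence R X <= R_Max X. *)

Section PointwiseOps.
Context (d : measure_display) (T : measurableType d) (R : realType).
Implicit Types (X : T -> R) (m : R).

Lemma Bb_addc X m : Bb X -> Bb (addc X m).
Proof.
move=> [mX [M hM]]; split; first exact: measurable_funD.
exists (M + `|m|) => w; apply: le_trans (ler_normD _ _) _.
by rewrite lerD2r.
Qed.

Lemma addcNK X m : addc (addc X (- m)) m = X.
Proof. by apply: funext => w; rewrite /addc addrNK. Qed.

Lemma fle_addc2r X Y m : fle X Y -> fle (addc X m) (addc Y m).
Proof. by move=> le w; rewrite /addc lerD2r. Qed.

Lemma fle_trans X Y Z : fle X Y -> fle Y Z -> fle X Z.
Proof. by move=> XY YZ w; exact: le_trans (XY w) (YZ w). Qed.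

End PointwiseOps.

Section MaximalRiskMeasure.
Context (d : measure_display) (T : measurableType d) (R : realType).
Variables (C : set (T -> R)) (H : (T -> R) -> R).
Hypotheses (C_Bb : C `<=` @Bb d T R) (C0 : C (zerof R))
  (C_addc : forall X m, C X -> C (addc X m)).
Hypotheses (H_addc : forall X m, C X -> H (addc X m) = H X + m)
  (H0 : H (zerof R) = 0) (H_ge0 : forall X, C X -> fle (zerof R) X -> 0 <= H X).
Implicit Types (X : T -> R) (m : R).

Local Notation premiums_above X :=
  [set H X0 | X0 in [set X0 | C X0 /\ fle X X0]].

Lemma has_inf_premiums_above X : Bb X -> has_inf (premiums_above X).
Proof.
move=> [_ [M hM]]; split.
  exists (H (addc (zerof R) M)), (addc (zerof R) M) => //.
  split; first exact: C_addc.
  by move=> w; rewrite /addc /zerof add0r; apply: le_trans (hM w); exact: ler_norm.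
exists (- M) => _ [X0 [CX0 XX0] <-].
have : 0 <= H (addc X0 M).
  apply: H_ge0; first exact: C_addc.
  move=> w; rewrite /zerof /addc addrC -lerBlDl sub0r.
  by apply: le_trans (XX0 w); move: (hM w); rewrite ler_norml => /andP[].
by rewrite H_addc // -lerBlDr sub0r.
Qed.

Lemma RMax_le X X0 : Bb X -> C X0 -> fle X X0 -> RMax C H X <= H X0.
Proof.
move=> BX CX0 XX0; have [_ lbd] := has_inf_premiums_above BX.
by apply: ge_inf => //; exists X0.
Qed.

Lemma lb_le_RMax X x : Bb X -> (forall X0, C X0 -> fle X X0 -> x <= H X0) ->
  x <= RMax C H X.
Proof.
move=> BX lbx; have [ne _] := has_inf_premiums_above BX.
by apply: lb_le_inf => // _ [X0 [CX0 XX0] <-]; exact: lbx.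
Qed.

Lemma RMax_le_premium X : C X -> RMax C H X <= H X.
Proof. by move=> CX; apply: RMax_le => //; exact: C_Bb. Qed.

Lemma RMax0 : RMax C H (zerof R) = 0.
Proof.
apply/eqP; rewrite eq_le -{1}H0 RMax_le_premium //=.
by apply: lb_le_RMax => [|X0 CX0]; [exact: C_Bb | exact: H_ge0].
Qed.

Lemma RMax_addc X m : Bb X -> RMax C H (addc X m) = RMax C H X + m.
Proof.
move=> BX; have BXm := Bb_addc m BX.
apply/eqP; rewrite eq_le; apply/andP; split.
  rewrite -lerBlDr; apply: lb_le_RMax => // X0 CX0 XX0.
  rewrite lerBlDr -H_addc //; apply: RMax_le => //; first exact: C_addc.
  exact: fle_addc2r.
apply: lb_le_RMax => // X0 CX0 XmX0; rewrite -lerBrDr -[X0](addcNK X0 m).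
rewrite H_addc ?addrK; last exact: C_addc.
apply: RMax_le => //; first exact: C_addc.
by rewrite -[X](addcNK X (- m)) opprK; exact: fle_addc2r.
Qed.

Lemma RMax_monotone X Y : Bb X -> Bb Y -> fle X Y -> RMax C H X <= RMax C H Y.
Proof.
move=> BX BY XY; apply: lb_le_RMax => // Y0 CY0 YY0.
by apply: RMax_le => //; exact: fle_trans YY0.
Qed.

Lemma RMax_risk_measure : risk_measure (RMax C H).
Proof.
split; first by move=> X m; exact: RMax_addc.
by split; [exact: RMax0 | exact: RMax_monotone].
Qed.

Lemma DMin_deviation_measure : deviation_measure C (DMin C H).
Proof.
split.
  move=> X m CX; rewrite /DMin H_addc // RMax_addc; last exact: C_Bb.
  by rewrite opprD addrACA subrr addr0.
split; first by rewrite /DMin H0 RMax0 subrr.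
by move=> X CX; rewrite /DMin subr_ge0; exact: RMax_le_premium.
Qed.

Section Decomposition.
Variables (Rm D : (T -> R) -> R).
Hypotheses (Rm_monotone : forall X Y, Bb X -> Bb Y -> fle X Y -> Rm X <= Rm Y)
  (D_ge0 : forall X, C X -> 0 <= D X) (H_decomp : forall X, C X -> H X = Rm X + D X).

Lemma decomposition_risk_le_RMax X : Bb X -> Rm X <= RMax C H X.
Proof.
move=> BX; apply: lb_le_RMax => // X0 CX0 XX0.
apply: le_trans (Rm_monotone BX (C_Bb CX0) XX0) _.
by rewrite H_decomp // lerDl; exact: D_ge0.
Qed.

Lemma DMin_le_decomposition_deviation X : C X -> DMin C H X <= D X.
Proof.
move=> CX; rewrite /DMin H_decomp // lerBlDr addrC lerD2l.
by apply: decomposition_risk_le_RMax; exact: C_Bb.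
Qed.

End Decomposition.

End MaximalRiskMeasure.

Theorem theorem2p3 (d : measure_display) (T : measurableType d) (R : realType)
    (C : set (T -> R)) (H : (T -> R) -> R) :
  admissible_domain C -> premium_principle C H ->
  (forall X, Bb X ->
     has_inf [set H X0 | X0 in [set X0 | C X0 /\ fle X X0]]) /\
  [/\ risk_measure (RMax C H),
      (forall X, C X -> RMax C H X <= H X),
      deviation_measure C (DMin C H),
      (forall X, C X -> H X = RMax C H X + DMin C H X) &
      (forall (Rm D : (T -> R) -> R),
         risk_measure Rm -> deviation_measure C D ->
         (forall X, C X -> H X = Rm X + D X) ->
         (forall X, Bb X -> Rm X <= RMax C H X) /\
         (forall X, C X -> DMin C H X <= D X))].
Proof.
move=> [C_Bb [C0 C_addc]] [H_addc [H0 H_ge0]].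
split; first by move=> X; exact: has_inf_premiums_above.
split.
- exact: RMax_risk_measure.
- exact: RMax_le_premium.
- exact: DMin_deviation_measure.
- by move=> X _; rewrite /DMin addrC subrK.
- move=> Rm D [_ [_ Rm_monotone]] [_ [_ D_ge0]] H_decomp; split=> X.
  + exact: (decomposition_risk_le_RMax C_Bb C0 C_addc H_addc H_ge0
      Rm_monotone D_ge0 H_decomp).
  + exact: (DMin_le_decomposition_deviation C_Bb C0 C_addc H_addc H_ge0
      Rm_monotone D_ge0 H_decomp).
Qed.
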